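(* Let $(\varphi_t)_{t\ge0}$ be a semigroup of analytic functions in the unit disk $\mathbb{D}$ and let $X$ be a Banach space of analytic functions on $\mathbb{D}$ on which each composition operator $C_t f=f\circ\varphi_t$ is bounded, such that (i) polynomials are dense in $X$; (ii) there is a constant $C>0$ such that if $f,g\in X$ and $|f|\le|g|$ on $\mathbb{D}$, then $\|f\|_X\le C\|g\|_X$; (iii) $M:=\limsup_{t\to0^+}\|C_t\|<+\infty$; (iv) the functions $\varphi_t$ ($t\ge0$) belong to $X$ and $\lim_{t\to0^+}\|\varphi_t-\varphi_0\|_X=0$. Then the semigroup of operators $(C_t)_{t\ge0}$ is strongly continuous on $X$, i.e. $\lim_{t\to0^+}\|f\circ\varphi_t-f\|_X=0$ for every $f\in X$.
   Context: A semigroup of analytic functions is a family $\{\varphi_t:t\ge0\}$ of analytic self-maps of $\mathbb{D}$ such that $\varphi_0$ is the identity, $\varphi_{t+s}=\varphi_t\circ\varphi_s$ for all $t,s\ge0$, and $\varphi_t\to\varphi_0$ uniformly on compact subsets of $\mathbb{D}$ as $t\to0^+$. *)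

From Stdlib Require Import Reals.
From Coquelicot Require Import Coquelicot.
Open Scope R_scope.

Definition in_disk (z : C) : Prop := Cmod z < 1.

Definition analytic_on_disk (f : C -> C) : Prop :=
  forall z : C, in_disk z -> @ex_derive C_AbsRing C_NormedModule f z.

Definition fzero : C -> C := fun _ => RtoC 0.
Definition fadd (f g : C -> C) : C -> C := fun z => Cplus (f z) (g z).
Definition fsub (f g : C -> C) : C -> C := fun z => Cminus (f z) (g z).
Definition fscal (a : C) (f : C -> C) : C -> C := fun z => Cmult a (f z).
Definition fcomp (f g : C -> C) : C -> C := fun z => f (g z).

Definition polyfun (a : nat -> C) (n : nat) : C -> C :=
  fun z => @sum_n C_Ring (fun k => Cmult (a k) (Cpow z k)) n.

(* Semigroup of analytic functions in D (indexed by t >= 0; values of phi t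
   for t < 0 and outside D are irrelevant). *)
Definition is_semigroup (phi : R -> C -> C) : Prop :=
  (forall t, 0 <= t -> analytic_on_disk (phi t)) /\
  (forall t, 0 <= t -> forall z, in_disk z -> in_disk (phi t z)) /\
  (forall z, in_disk z -> phi 0 z = z) /\
  (forall t s, 0 <= t -> 0 <= s -> forall z, in_disk z ->
      phi (t + s) z = phi t (phi s z)) /\
  (* phi_t -> phi_0 uniformly on compact subsets of D as t -> 0+;
     every compact subset of D lies in a closed disk |z| <= r, r < 1 *)
  (forall r, 0 <= r < 1 -> forall eps, 0 < eps -> exists delta, 0 < delta /\
      forall t, 0 < t < delta -> forall z, Cmod z <= r ->
        Cmod (Cminus (phi t z) (phi 0 z)) < eps).

Definition is_banach_space_of_analytic (X : (C -> C) -> Prop) (N : (C -> C) -> R) : Prop :=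
  (forall f, X f -> analytic_on_disk f) /\
  X fzero /\
  (forall f g, X f -> X g -> X (fadd f g)) /\
  (forall a f, X f -> X (fscal a f)) /\
  (forall f, X f -> 0 <= N f) /\
  (forall f g, X f -> X g -> N (fadd f g) <= N f + N g) /\
  (forall a f, X f -> N (fscal a f) = Cmod a * N f) /\
  (forall f, X f -> N f = 0 -> forall z, in_disk z -> f z = RtoC 0) /\
  (forall u : nat -> C -> C, (forall n, X (u n)) ->
     (forall eps, 0 < eps -> exists n0, forall m n, (n0 <= m)%nat -> (n0 <= n)%nat ->
        N (fsub (u m) (u n)) < eps) ->
     exists f, X f /\ forall eps, 0 < eps -> exists n0, forall n, (n0 <= n)%nat ->
        N (fsub (u n) f) < eps).

From Stdlib Require Import Reals Lra FunctionalExtensionality.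
From Coquelicot Require Import Coquelicot.
Open Scope R_scope.

(** Density of the polynomials together with the bound on [‖C_t‖] for small
    [t] reduces strong continuity to polynomials (an ε/3 argument).  A
    polynomial [p = Σ a_k z^k] is Lipschitz on the closed disk with constant
    [L = Σ k |a_k|], and [φ_0] is the identity, so the lattice property (ii)
    gives [‖p ∘ φ_t - p‖ <= C L ‖φ_t - φ_0‖], which tends to 0 by (iv). *)

Lemma Cmod_Cpow_le_1 (z : C) (k : nat) : Cmod z <= 1 -> Cmod (Cpow z k) <= 1.
Proof.
  intros Hz. induction k as [|k IH]; simpl.
  - rewrite Cmod_1; lra.
  - rewrite Cmod_mult.
    pose proof (Cmod_ge_0 z). pose proof (Cmod_ge_0 (Cpow z k)). nra.
Qed.

Lemma Cmod_Cpow_sub_le (w z : C) (k : nat) : Cmod w <= 1 -> Cmod z <= 1 ->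
  Cmod (Cminus (Cpow w k) (Cpow z k)) <= INR k * Cmod (Cminus w z).
Proof.
  intros Hw Hz. induction k as [|k IH].
  - simpl. replace (Cminus 1 1) with (RtoC 0) by ring. rewrite Cmod_0. lra.
  - replace (Cminus (Cpow w (S k)) (Cpow z (S k))) with
      (Cplus (Cmult w (Cminus (Cpow w k) (Cpow z k))) (Cmult (Cminus w z) (Cpow z k)))
      by (simpl; ring).
    eapply Rle_trans; [apply Cmod_triangle|].
    rewrite !Cmod_mult, S_INR.
    pose proof (Cmod_Cpow_le_1 z k Hz).
    pose proof (Cmod_ge_0 w). pose proof (Cmod_ge_0 (Cminus w z)).
    pose proof (Cmod_ge_0 (Cminus (Cpow w k) (Cpow z k))).
    pose proof (Cmod_ge_0 (Cpow z k)).
    nra.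
Qed.

Definition polyfun_lip_const (a : nat -> C) (n : nat) : R :=
  sum_f_R0 (fun k => Cmod (a k) * INR k) n.

Lemma polyfun_lip_const_ge_0 (a : nat -> C) (n : nat) : 0 <= polyfun_lip_const a n.
Proof.
  apply cond_pos_sum. intros k.
  apply Rmult_le_pos; [apply Cmod_ge_0 | apply pos_INR].
Qed.

Lemma Cmod_polyfun_sub_le (a : nat -> C) (n : nat) (w z : C) :
  Cmod w <= 1 -> Cmod z <= 1 ->
  Cmod (Cminus (polyfun a n w) (polyfun a n z)) <=
  polyfun_lip_const a n * Cmod (Cminus w z).
Proof.
  intros Hw Hz. unfold polyfun, polyfun_lip_const. induction n as [|n IH].
  - rewrite !sum_O. simpl.
    replace (Cminus (Cmult (a 0%nat) 1) (Cmult (a 0%nat) 1)) with (RtoC 0) by ring.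
    rewrite Cmod_0. lra.
  - rewrite !(sum_Sn (G := C_AbelianMonoid)). simpl sum_f_R0.
    set (P := fun x => @sum_n C_Ring (fun k => Cmult (a k) (Cpow x k)) n).
    change (Cmod (Cminus (plus (P w) (Cmult (a (S n)) (Cpow w (S n))))
                         (plus (P z) (Cmult (a (S n)) (Cpow z (S n))))) <=
            (sum_f_R0 (fun k => Cmod (a k) * INR k) n + Cmod (a (S n)) * INR (S n))
              * Cmod (Cminus w z)).
    replace (Cminus _ _) with
      (Cplus (Cminus (P w) (P z)) (Cmult (a (S n)) (Cminus (Cpow w (S n)) (Cpow z (S n)))))
      by (unfold plus; simpl; ring).
    eapply Rle_trans; [apply Cmod_triangle|].
    rewrite Cmod_mult. unfold P.
    pose proof (Cmod_Cpow_sub_le w z (S n) Hw Hz).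
    pose proof (Cmod_ge_0 (a (S n))).
    assert (Cmod (a (S n)) * Cmod (Cminus (Cpow w (S n)) (Cpow z (S n))) <=
            Cmod (a (S n)) * (INR (S n) * Cmod (Cminus w z)))
      by (apply Rmult_le_compat_l; auto).
    nra.
Qed.

Lemma filterlim_scal_0 {T : Type} {F : (T -> Prop) -> Prop} {FF : Filter F}
  (c : R) (h : T -> R) :
  filterlim h F (locally 0) -> filterlim (fun t => c * h t) F (locally 0).
Proof.
  intros Hh. rewrite <- (Rmult_0_r c).
  exact (filterlim_comp _ _ _ h (Rmult c) F (locally 0) _ Hh
           (filterlim_scal_r (V := R_NormedModule) c 0)).
Qed.

Lemma at_right_0_lt (d : R) : 0 < d -> at_right 0 (fun t => 0 < t < d).
Proof.
  intros Hd. exists (mkposreal d Hd). intros t Ht Htpos. split; [exact Htpos|].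
  change (Rabs (t - 0) < d) in Ht. rewrite Rminus_0_r in Ht.
  pose proof (Rle_abs t). lra.
Qed.

Section FunctionSpace.

Variables (X : (C -> C) -> Prop) (N : (C -> C) -> R).
Hypothesis HX : is_banach_space_of_analytic X N.

Lemma X_fsub (u v : C -> C) : X u -> X v -> X (fsub u v).
Proof.
  destruct HX as [_ [_ [Xadd [Xscal _]]]]. intros Hu Hv.
  replace (fsub u v) with (fadd u (fscal (Copp 1) v)) by
    (apply functional_extensionality; intro z; unfold fadd, fscal, fsub; ring).
  auto.
Qed.

Lemma N_ge_0 (u : C -> C) : X u -> 0 <= N u.
Proof. destruct HX as [_ [_ [_ [_ [Nnn _]]]]]. auto. Qed.

Lemma N_fsub_sym (u v : C -> C) : X u -> X v -> N (fsub u v) = N (fsub v u).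
Proof.
  destruct HX as [_ [_ [_ [_ [_ [_ [Nscal _]]]]]]]. intros Hu Hv.
  replace (fsub v u) with (fscal (Copp 1) (fsub u v)) by
    (apply functional_extensionality; intro z; unfold fscal, fsub; ring).
  rewrite Nscal by (apply X_fsub; auto). rewrite Cmod_m1. ring.
Qed.

Lemma N_fsub_triangle (u v w : C -> C) : X u -> X v -> X w ->
  N (fsub u w) <= N (fsub u v) + N (fsub v w).
Proof.
  destruct HX as [_ [_ [_ [_ [_ [Ntri _]]]]]]. intros Hu Hv Hw.
  replace (fsub u w) with (fadd (fsub u v) (fsub v w)) by
    (apply functional_extensionality; intro z; unfold fadd, fsub; ring).
  apply Ntri; apply X_fsub; auto.
Qed.

Lemma N_le_of_Cmod_le (Cc L : R) (u v : C -> C) :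
  (forall f g, X f -> X g ->
     (forall z, in_disk z -> Cmod (f z) <= Cmod (g z)) -> N f <= Cc * N g) ->
  0 <= L -> X u -> X v ->
  (forall z, in_disk z -> Cmod (u z) <= L * Cmod (v z)) ->
  N u <= Cc * L * N v.
Proof.
  destruct HX as [_ [_ [_ [Xscal [_ [_ [Nscal _]]]]]]].
  intros Hlat HL Hu Hv Huv.
  rewrite Rmult_assoc, <- (Rabs_pos_eq L HL), <- Cmod_R, <- Nscal by exact Hv.
  apply Hlat; [exact Hu | apply Xscal, Hv |].
  intros z Hz. unfold fscal. rewrite Cmod_mult, Cmod_R, Rabs_pos_eq by exact HL.
  auto.
Qed.

Lemma strong_cvg_of_dense (D : (C -> C) -> Prop) (T : R -> (C -> C) -> C -> C) :
  (forall f, X f -> forall eps, 0 < eps ->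
     exists p, D p /\ X p /\ N (fsub f p) < eps) ->
  (forall t u, 0 < t -> X u -> X (T t u)) ->
  (forall t u v, T t (fsub u v) = fsub (T t u) (T t v)) ->
  (exists M delta, 0 < delta /\ forall t, 0 < t < delta ->
     forall u, X u -> N (T t u) <= M * N u) ->
  (forall p, D p -> X p -> filterlim (fun t => N (fsub (T t p) p)) (at_right 0) (locally 0)) ->
  forall f, X f -> filterlim (fun t => N (fsub (T t f) f)) (at_right 0) (locally 0).
Proof.
  intros Hdense XT Tsub [M [delta [Hdelta HM]]] HD f Hf.
  apply filterlim_locally. intros eps.
  set (K := Rabs M + 2).
  assert (HK : 0 < K) by (unfold K; pose proof (Rabs_pos M); lra).
  assert (Heps : 0 < eps / (2 * K)) by (apply Rdiv_lt_0_compat; [apply cond_pos | lra]).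
  destruct (Hdense f Hf _ Heps) as [p [Dp [Xp Hfp]]].
  pose proof (proj1 (filterlim_locally _ _) (HD p Dp Xp) (pos_div_2 eps)) as Hp.
  generalize (filter_and _ _ Hp (at_right_0_lt delta Hdelta)).
  apply filter_imp. intros t [Hpt Ht].
  change (Rabs (N (fsub (T t p) p) - 0) < eps / 2) in Hpt.
  change (Rabs (N (fsub (T t f) f) - 0) < eps).
  rewrite Rminus_0_r in *.
  assert (Xfp : X (fsub f p)) by (apply X_fsub; auto).
  assert (XTf : X (T t f)) by (apply XT; [lra | exact Hf]).
  assert (XTp : X (T t p)) by (apply XT; [lra | exact Xp]).
  assert (Hsplit : N (fsub (T t f) f) <=
            N (T t (fsub f p)) + N (fsub (T t p) p) + N (fsub f p)).
  { rewrite Tsub, (N_fsub_sym f p) by auto.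
    pose proof (N_fsub_triangle (T t f) (T t p) f XTf XTp Hf).
    pose proof (N_fsub_triangle (T t p) p f XTp Xp Hf). lra. }
  assert (HTfp : N (T t (fsub f p)) + N (fsub f p) <= K * N (fsub f p)).
  { pose proof (HM t Ht _ Xfp). pose proof (N_ge_0 _ Xfp). pose proof (Rle_abs M).
    unfold K. nra. }
  assert (Hsmall : K * N (fsub f p) < eps / 2).
  { replace (eps / 2) with (K * (eps / (2 * K))) by (field; lra).
    apply Rmult_lt_compat_l; auto. }
  rewrite Rabs_pos_eq by (apply N_ge_0, X_fsub; auto).
  pose proof (Rle_abs (N (fsub (T t p) p))). lra.
Qed.

Lemma polyfun_comp_cvg (phi : R -> C -> C) (Cc : R) (a : nat -> C) (n : nat) :
  (forall t, 0 <= t -> forall z, in_disk z -> in_disk (phi t z)) ->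
  (forall z, in_disk z -> phi 0 z = z) ->
  (forall t, 0 <= t -> X (phi t)) ->
  (forall t u, 0 < t -> X u -> X (fcomp u (phi t))) ->
  (forall f g, X f -> X g ->
     (forall z, in_disk z -> Cmod (f z) <= Cmod (g z)) -> N f <= Cc * N g) ->
  X (polyfun a n) ->
  filterlim (fun t => N (fsub (phi t) (phi 0))) (at_right 0) (locally 0) ->
  filterlim (fun t => N (fsub (fcomp (polyfun a n) (phi t)) (polyfun a n)))
    (at_right 0) (locally 0).
Proof.
  intros Hdisk Hid Xphi Xcomp Hlat Xp Hcvg.
  set (L := polyfun_lip_const a n).
  apply (filterlim_le_le (fun _ => 0) _ (fun t => Cc * L * N (fsub (phi t) (phi 0))) (Finite 0));
    [| apply filterlim_const | apply filterlim_scal_0, Hcvg].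
  apply (filter_imp (fun t => 0 < t)); [| exists (mkposreal 1 Rlt_0_1); auto].
  intros t Ht.
  assert (Xd : X (fsub (fcomp (polyfun a n) (phi t)) (polyfun a n)))
    by (apply X_fsub; auto).
  split; [apply N_ge_0, Xd |].
  apply N_le_of_Cmod_le; auto.
  - apply polyfun_lip_const_ge_0.
  - apply X_fsub; apply Xphi; lra.
  - intros z Hz. unfold fsub, fcomp. rewrite <- (Hid z Hz) at 2.
    apply Cmod_polyfun_sub_le; rewrite ?(Hid z Hz);
      [pose proof (Hdisk t ltac:(lra) z Hz) |]; unfold in_disk in *; lra.
Qed.

End FunctionSpace.
Theorem proposition4p1 (phi : R -> C -> C) (X : (C -> C) -> Prop) (N : (C -> C) -> R) :
  is_semigroup phi ->
  is_banach_space_of_analytic X N ->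
  (* each composition operator C_t f = f o phi_t is bounded on X *)
  (forall t, 0 <= t -> exists K, forall f, X f ->
      X (fcomp f (phi t)) /\ N (fcomp f (phi t)) <= K * N f) ->
  (* (i) polynomials belong to X and are dense in X *)
  (forall a n, X (polyfun a n)) ->
  (forall f, X f -> forall eps, 0 < eps ->
      exists a n, N (fsub f (polyfun a n)) < eps) ->
  (* (ii) lattice-type property of the norm *)
  (exists Cc, 0 < Cc /\ forall f g, X f -> X g ->
      (forall z, in_disk z -> Cmod (f z) <= Cmod (g z)) -> N f <= Cc * N g) ->
  (* (iii) limsup_{t -> 0+} ||C_t|| < +oo *)
  (exists M delta, 0 < delta /\ forall t, 0 < t < delta ->
      forall f, X f -> N (fcomp f (phi t)) <= M * N f) ->
  (* (iv) phi_t in X and ||phi_t - phi_0||_X -> 0 as t -> 0+ *)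
  (forall t, 0 <= t -> X (phi t)) ->
  filterlim (fun t => N (fsub (phi t) (phi 0))) (at_right 0) (locally 0) ->
  (* conclusion: strong continuity *)
  forall f, X f ->
    filterlim (fun t => N (fsub (fcomp f (phi t)) f)) (at_right 0) (locally 0).
Proof.
  intros [_ [Hdisk [Hid _]]] HX Hbd Hpol Hdense [Cc [_ Hlat]] Hbound Xphi Hcvg.
  assert (Xcomp : forall t u, 0 < t -> X u -> X (fcomp u (phi t))).
  { intros t u Ht Hu. destruct (Hbd t (Rlt_le _ _ Ht)) as [K HK]. apply (HK u Hu). }
  apply (strong_cvg_of_dense X N HX (fun p => exists a n, p = polyfun a n)
           (fun t u => fcomp u (phi t))).
  - intros f Hf eps Heps. destruct (Hdense f Hf eps Heps) as [a [n Hp]].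
    exists (polyfun a n). eauto.
  - exact Xcomp.
  - intros t u v. reflexivity.
  - exact Hbound.
  - intros p [a [n ->]] _. apply (polyfun_comp_cvg X N HX phi Cc); auto.
Qed.
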